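(* Let $(M,g)$ be a $\mathcal{W}^{\star}$-flat space-time (i.e. $\mathcal{W}^{\star}_{ijkl}=0$) that is a dust fluid, i.e. it satisfies Einstein's field equation $R_{ij}-\frac12 R g_{ij}+\Lambda g_{ij}=kT_{ij}$ with $T_{ij}=\mu u_iu_j$. Then $M$ is a vacuum space-time: $T_{ij}=0$.
   Context: A space-time is a $4$-dimensional Lorentzian manifold $(M,g)$ with Levi-Civita connection $\nabla$. $R_{ijkl}$ denotes the components of the Riemann curvature tensor, with index conventions such that the Ricci tensor is $R_{jk}=g^{il}R_{ijkl}$; $R=g^{jk}R_{jk}$ is the scalar curvature. The $\mathcal{W}^{\star}$-curvature tensor is $\mathcal{W}^{\star}_{ijkl}=R_{ijkl}-\tfrac{1}{3}\left[g_{jk}R_{il}-g_{jl}R_{ik}\right]$. $\Lambda$ is a constant and $k\neq0$ a constant; $\mu$ is a smooth function (energy density) and $u$ is a unit timelike vector field with $u_i=g_{ij}u^j$, $u_iu^i=-1$. *)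

(* Pointwise (component) formalization of the space-time data. *)
From HB Require Import structures.
From mathcomp Require Import all_boot all_order all_algebra.
Set Implicit Arguments. Unset Strict Implicit. Unset Printing Implicit Defensive.
Import Order.TTheory GRing.Theory Num.Theory.
Local Open Scope ring_scope.

Definition tensor4 (R : Type) := 'I_4 -> 'I_4 -> 'I_4 -> 'I_4 -> R.

Definition ginv (R : realFieldType) (g : 'M[R]_4) : 'M[R]_4 := invmx g.

Definition lorentz_diag (R : realFieldType) : 'M[R]_4 :=
  diag_mx (\row_(i < 4) (if i == ord0 then -1 else 1)).

Definition lorentzian (R : realFieldType) (g : 'M[R]_4) : Prop :=
  g^T = g /\ exists P : 'M[R]_4, P \in unitmx /\ P^T *m g *m P = lorentz_diag R.

Definition ricci (R : realFieldType) (g : 'M[R]_4) (Rm : tensor4 R) (j k : 'I_4) : R :=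
  \sum_(i < 4) \sum_(l < 4) ginv g i l * Rm i j k l.

Definition scal (R : realFieldType) (g : 'M[R]_4) (Rm : tensor4 R) : R :=
  \sum_(j < 4) \sum_(k < 4) ginv g j k * ricci g Rm j k.

Definition Wstar (R : realFieldType) (g : 'M[R]_4) (Rm : tensor4 R) : tensor4 R :=
  fun i j k l => Rm i j k l - 3%:R^-1 * (g j k * ricci g Rm i l - g j l * ricci g Rm i k).

Definition lower (R : realFieldType) (g : 'M[R]_4) (u : 'I_4 -> R) (i : 'I_4) : R :=
  \sum_(j < 4) g i j * u j.

Definition dustT (R : realFieldType) (g : 'M[R]_4) (mu : R) (u : 'I_4 -> R) (i j : 'I_4) : R :=
  mu * lower g u i * lower g u j.

From HB Require Import structures.
From mathcomp Require Import all_boot all_order all_algebra.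
From mathcomp Require Import ring.
Set Implicit Arguments. Unset Strict Implicit. Unset Printing Implicit Defensive.
Import Order.TTheory GRing.Theory Num.Theory.
Local Open Scope ring_scope.

(* Contracting W*_{ijkl} = 0 with g^{il} gives R_{jk} = (R/4) g_{jk}, so the
   field equation becomes (Lambda - R/4) g_{ij} = k mu u_i u_j.  If the factor
   Lambda - R/4 were nonzero, the metric would be a rank-one outer product and
   hence singular, which a Lorentzian metric is not.  So that factor vanishes,
   and with it k T_{ij}, hence T_{ij} since k != 0. *)

Lemma outer_notin_unitmx (F : fieldType) (n : nat) (a b : 'cV[F]_n.+2) :
  a *m b^T \notin unitmx.
Proof.
rewrite -row_full_unit /row_full; apply/negP => /eqP rk_full.
have := leq_trans (mxrankM_maxl a b^T) (rank_leq_col a).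
by rewrite rk_full.
Qed.

Section FourMetric.

Variables (R : realFieldType) (G : 'M[R]_4).

Lemma lorentzian_unitmx : lorentzian G -> G \in unitmx.
Proof.
move=> [_ [P [_ congP]]].
have : \det (P^T *m G *m P) = -1.
  rewrite congP /lorentz_diag det_diag.
  by rewrite !big_ord_recr big_ord0 /= !mxE /=; ring.
rewrite !det_mulmx det_tr => det_congr.
rewrite unitmxE unitfE; apply/eqP => detG0.
by move: det_congr; rewrite detG0 mulr0 mul0r => /eqP; rewrite eq_sym oppr_eq0 oner_eq0.
Qed.

Lemma ginv_contract_sym : G^T = G -> G \in unitmx ->
  forall i j, \sum_(l < 4) ginv G i l * G j l = (i == j)%:R.
Proof.
move=> Gsym Gunit i j; transitivity ((ginv G *m G) i j).
  by rewrite mxE; apply: eq_bigr => l _; rewrite -{2}Gsym mxE.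
by rewrite /ginv mulVmx // mxE.
Qed.

Variable Rm : tensor4 R.

Lemma riemann_of_Wstar_flat : (forall i j k l, Wstar G Rm i j k l = 0) ->
  forall i j k l,
    Rm i j k l = 3%:R^-1 * (G j k * ricci G Rm i l - G j l * ricci G Rm i k).
Proof. by move=> W i j k l; apply/eqP; rewrite -subr_eq0; apply/eqP/W. Qed.

Lemma ricci_of_Wstar_flat : G^T = G -> G \in unitmx ->
  (forall i j k l, Wstar G Rm i j k l = 0) ->
  forall j k, ricci G Rm j k = 4%:R^-1 * scal G Rm * G j k.
Proof.
move=> Gsym Gunit W j k.
have term i l : 3%:R * (ginv G i l * Rm i j k l)
    = G j k * (ginv G i l * ricci G Rm i l) - ginv G i l * G j l * ricci G Rm i k.
  by rewrite (riemann_of_Wstar_flat W); field.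
set ric := ricci G Rm; set S := scal G Rm.
have contract_l i : \sum_(l < 4) ginv G i l * G j l * ric i k = (i == j)%:R * ric i k.
  by rewrite -mulr_suml ginv_contract_sym.
have ric3 : 3%:R * ric j k = G j k * S - ric j k.
  rewrite {1}/ric /ricci mulr_sumr.
  under eq_bigr => i _ do
    rewrite mulr_sumr (eq_bigr _ (fun l _ => term i l)) sumrB -mulr_sumr contract_l.
  rewrite sumrB -mulr_sumr [X in _ - X](bigD1 j) //= eqxx mul1r [X in ric j k + X]big1 ?addr0 //.
  by move=> i /negPf ->; rewrite mul0r.
have ric4 : 4%:R * ric j k = G j k * S.
  by rewrite -[4%N]/(3 + 1)%N natrD mulrDl mul1r ric3 subrK.
by rewrite -mulrA [S * _]mulrC -ric4 mulrA mulVf ?pnatr_eq0 // mul1r.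
Qed.

Lemma einstein_trace_free (Lam k mu : R) (u : 'I_4 -> R) :
  (forall j k, ricci G Rm j k = 4%:R^-1 * scal G Rm * G j k) ->
  (forall i j, ricci G Rm i j - 2%:R^-1 * scal G Rm * G i j + Lam * G i j
               = k * dustT G mu u i j) ->
  forall i j, (Lam - 4%:R^-1 * scal G Rm) * G i j = k * dustT G mu u i j.
Proof.
by move=> ric einstein i j; rewrite -einstein ric; field.
Qed.

End FourMetric.

Lemma dust_metric_outer (R : realFieldType) (G : 'M[R]_4) (c k mu : R)
    (u : 'I_4 -> R) :
  c != 0 -> (forall i j, c * G i j = k * dustT G mu u i j) ->
  G = \col_i (c^-1 * k * mu * lower G u i) *m (\col_j lower G u j)^T.
Proof.
move=> c0 cG; apply/matrixP => i j.
rewrite !mxE big_ord1 !mxE -[LHS](mulKf c0) cG /dustT.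
by ring.
Qed.

(* The normalisation u_i u^i = -1 is deliberately unused: the rank argument does
   not need it. *)
Theorem mainTheorem18 (R : realFieldType) (M : Type)
  (g : M -> 'M[R]_4) (Rm : M -> tensor4 R) (u : M -> 'I_4 -> R) (mu : M -> R)
  (Lam k : R) :
  k != 0 ->
  (forall x, lorentzian (g x)) ->
  (forall x, \sum_(i < 4) lower (g x) (u x) i * u x i = -1) ->
  (forall x i j k' l, Wstar (g x) (Rm x) i j k' l = 0) ->
  (forall x i j, ricci (g x) (Rm x) i j - 2%:R^-1 * scal (g x) (Rm x) * g x i j
                 + Lam * g x i j = k * dustT (g x) (mu x) (u x) i j) ->
  forall x i j, dustT (g x) (mu x) (u x) i j = 0.
Proof.
move=> k0 lor _ W einstein x i j.
have Gunit := lorentzian_unitmx (lor x).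
have [Gsym _] := lor x.
have cG := einstein_trace_free (ricci_of_Wstar_flat Gsym Gunit (W x)) (einstein x).
have c0 : Lam - 4%:R^-1 * scal (g x) (Rm x) = 0.
  apply/eqP/negPn/negP => c0.
  by move: Gunit; rewrite (dust_metric_outer c0 cG) (negPf (outer_notin_unitmx _ _)).
by apply: (mulfI k0); rewrite -cG c0 mul0r mulr0.
Qed.
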